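(* Let $n\geq2$, $H=\{x\in\mathbb{R}^{n+1}:\sum_i x_i=0\}$, $p_H$ the orthogonal projection onto $H$, $V_{\mathcal{P}}=p_H(\{0,1\}^{n+1}\setminus\{(0,\dots,0),(1,\dots,1)\})$ (the vertex set of the Voronoi region of $A_n=\mathbb{Z}^{n+1}\cap H$), and let $\tilde G$ be the Cayley graph on $\frac12p_H(\mathbb{Z}^{n+1})$ with generating set $\frac12V_{\mathcal{P}}$. Then every clique $C$ of $\tilde G$ satisfies $\delta^0(C)=\frac{|C|}{|N[C]|}\leq\frac{1}{2^n}$.
   Context: In the Cayley graph, $x,y$ are adjacent iff $x-y\in\frac12V_{\mathcal{P}}$. A clique is a set of vertices any two distinct elements of which are adjacent. $N[C]=C+(\{0\}\cup\frac12V_{\mathcal{P}})$ is the closed neighborhood of $C$ in $\tilde G$. *)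

From HB Require Import structures.
From mathcomp Require Import all_boot all_order all_algebra.
From mathcomp Require Import reals.
Set Implicit Arguments. Unset Strict Implicit. Unset Printing Implicit Defensive.
Import Order.TTheory GRing.Theory Num.Theory.
Local Open Scope ring_scope.

Section Defs.
Variables (R : realType) (n : nat).
Notation vec := 'rV[R]_(n.+1).

Definition pH (x : vec) : vec :=
  x - ((\sum_(i < n.+1) x 0 i) / (n.+1)%:R) *: const_mx 1.

Definition vec01 (f : {ffun 'I_(n.+1) -> bool}) : vec := \row_i (f i)%:R.

Definition VP : seq vec :=
  [seq pH (vec01 f) | f <- enum {ffun 'I_(n.+1) -> bool}
     & (f != [ffun => false]) && (f != [ffun => true])].

Definition halfVP : seq vec := [seq (2%:R)^-1 *: v | v <- VP].

Definition vertex (x : vec) : Prop :=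
  exists z : 'rV[int]_(n.+1), x = (2%:R)^-1 *: pH (map_mx (fun k : int => k%:~R) z).

Definition adjacent (x y : vec) : bool := (x - y) \in halfVP.

Definition clique (C : seq vec) : Prop :=
  uniq C /\ (forall x, x \in C -> vertex x) /\
  (forall x y, x \in C -> y \in C -> x != y -> adjacent x y).

Definition closedNbhd (C : seq vec) : seq vec :=
  undup [seq c + v | c <- C, v <- 0 :: halfVP].

Definition delta0 (C : seq vec) : R :=
  (size C)%:R / (size (closedNbhd C))%:R.
End Defs.

From HB Require Import structures.
From mathcomp Require Import all_boot all_order all_algebra.
From mathcomp Require Import reals.
From mathcomp Require Import lra.
Import Order.TTheory GRing.Theory Num.Theory.
Local Open Scope ring_scope.

Set Implicit Arguments.
Unset Strict Implicit.
Unset Printing Implicit Defensive.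

(** For x in C pick a pivot coordinate a(x) minimising (x - c0)_j for a fixed
    c0 in C, ties broken by maximising the load sum_(z in C) (z - c0)_j.
    Since distinct points of C differ by an element of (1/2)V_P, all
    coordinate differences within C are in {-1/2, 0, 1/2}, and the tie-break
    forces (x - y)_a(x) < (x - y)_a(y) whenever x <> y.  The 2^n points
    x + (1/2)p_H(1_S) with a(x) not in S lie in N[C], and they are pairwise
    distinct: if x + (1/2)p_H(1_S) = y + (1/2)p_H(1_T), then
    (x - y)_a(x) - (x - y)_a(y) = (1_T(a(x)) + 1_S(a(y)))/2 >= 0, so x = y
    and then S = T.  Hence |N[C]| >= 2^n |C|. *)

Lemma card_ffun_false_at (T : finType) (i : T) :
  #|[pred f : {ffun T -> bool} | ~~ f i]| = (2 ^ #|T|.-1)%N.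
Proof.
rewrite -(cardC1 i) -card_bool -(card_pffun_on false _ predT).
apply: eq_card => f; rewrite inE.
apply/idP/pffun_onP => [fi | [/subsetP sub _]].
- split=> //; apply/subsetP => j; rewrite !inE.
  by apply: contra_neq => ->; apply/negbTE.
- by move: (sub i); rewrite !inE eqxx; case: (f i) => // /(_ isT).
Qed.

Section HalfProjection.
Variables (R : realType) (n : nat).
Notation vec := 'rV[R]_(n.+1).
Implicit Types (f : {ffun 'I_(n.+1) -> bool}) (x y v : vec).

Definition half_pH01 f : vec := 2%:R^-1 *: pH (vec01 R f).

Lemma half_pH01_sub f j k :
  half_pH01 f 0 j - half_pH01 f 0 k = ((f j)%:R - (f k)%:R) / 2.
Proof. rewrite !mxE !mulr1; set s := (\sum_(i < n.+1) _) / _; lra. Qed.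

Lemma half_pH01_false : half_pH01 [ffun => false] = 0.
Proof.
apply/rowP => j; rewrite !mxE big1 => [|i _]; last by rewrite !mxE ffunE.
by rewrite ffunE mul0r mul0r subrr mulr0.
Qed.

Lemma halfVP_half_pH01 v : v \in halfVP R n ->
  exists2 f, v = half_pH01 f & exists j k, f j && ~~ f k.
Proof.
case/mapP => u /mapP[f]; rewrite mem_filter => /andP[/andP[f0 f1] _] -> ->.
exists f => //.
have [j fj] : exists j, f j.
  apply/existsP; apply: contraR f0 => /existsPn f0.
  by apply/eqP/ffunP => i; rewrite ffunE; apply/negbTE.
have [k fk] : exists k, ~~ f k.
  apply/existsP; apply: contraR f1 => /existsPn f1.
  by apply/eqP/ffunP => i; rewrite ffunE; apply/negPn.
by exists j, k; rewrite fj.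
Qed.

Lemma half_pH01_nbhd f i : ~~ f i -> half_pH01 f \in 0 :: halfVP R n.
Proof.
move=> fi; rewrite in_cons.
have [->|f0] := eqVneq f [ffun => false]; first by rewrite half_pH01_false eqxx.
apply/orP; right; do 2 apply: map_f.
rewrite mem_filter mem_enum andbT f0 /=.
by apply: contraNneq fi => ->; rewrite ffunE.
Qed.

Lemma adjacent_step x y j k : adjacent x y -> exists b1 b2 : bool,
  (x 0 j - y 0 j) - (x 0 k - y 0 k) = (b1%:R - b2%:R) / 2.
Proof.
case/halfVP_half_pH01 => f xy _; exists (f j), (f k).
by rewrite -half_pH01_sub -xy !mxE.
Qed.

Lemma adjacent_sep x y : adjacent x y ->
  exists j k, x 0 j - y 0 j < x 0 k - y 0 k.
Proof.
case/halfVP_half_pH01 => f xy [k [j /andP[fk fj]]]; exists j, k.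
have := half_pH01_sub f k j; rewrite -xy !mxE fk (negbTE fj) /=; lra.
Qed.

End HalfProjection.

Arguments half_pH01 {R n} f.

Section Pivot.
Variables (R : realType) (n : nat).
Notation vec := 'rV[R]_(n.+1).
Variables (C : seq vec) (c0 : vec).
Hypotheses (cliqueC : clique C) (c0C : c0 \in C).
Implicit Types (x y z : vec) (j k l : 'I_(n.+1)) (f g : {ffun 'I_(n.+1) -> bool}).

Lemma clique_step x y j k : x \in C -> y \in C -> exists b1 b2 : bool,
  (x 0 j - y 0 j) - (x 0 k - y 0 k) = (b1%:R - b2%:R) / 2.
Proof.
move=> xC yC; have [->|xy] := eqVneq x y.
  by exists false, false; rewrite !subrr mul0r.
by case: cliqueC => _ [_ /(_ x y xC yC xy)]; apply: adjacent_step.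
Qed.

Lemma clique_sep x y : x \in C -> y \in C -> x != y ->
  exists j k, x 0 j - y 0 j < x 0 k - y 0 k.
Proof. by move=> xC yC xy; case: cliqueC => _ [_ /(_ x y xC yC xy)/adjacent_sep]. Qed.

Definition offset x j := x 0 j - c0 0 j.

Definition load j := \sum_(z <- C) offset z j.

Definition argmin_offset x : 'I_(n.+1) := Order.arg_min ord0 xpredT (offset x).

Definition pivot x : 'I_(n.+1) :=
  Order.arg_max (argmin_offset x) (fun j => offset x j == offset x (argmin_offset x)) load.

Lemma argmin_offsetP x k : offset x (argmin_offset x) <= offset x k.
Proof. by rewrite /argmin_offset; case: Order.TotalTheory.arg_minP => // i _ ->. Qed.

Lemma pivot_offset x : offset x (pivot x) = offset x (argmin_offset x).
Proof. by rewrite /pivot; case: Order.TotalTheory.arg_maxP => // i /eqP. Qed.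

Lemma pivot_min x k : offset x (pivot x) <= offset x k.
Proof. by rewrite pivot_offset argmin_offsetP. Qed.

Lemma pivot_max_load x k : offset x k = offset x (pivot x) -> load k <= load (pivot x).
Proof.
rewrite pivot_offset => /eqP xk.
by rewrite /pivot; case: Order.TotalTheory.arg_maxP => // i _; apply.
Qed.

Lemma load_lt_of_min_offset x y j k : x \in C -> y \in C ->
  (forall l, offset x j <= offset x l) -> (forall l, offset y j <= offset y l) ->
  x 0 k - y 0 k < x 0 j - y 0 j -> offset x k = offset x j /\ load j < load k.
Proof.
move=> xC yC xj yj lt_kj.
have [b1 [b2 xy]] := clique_step k j xC yC.
have [e1 [e2 yc0]] := clique_step k j yC c0C.
have [x_kj y_kj] : offset x k = offset x j /\ offset y k - offset y j = 2^-1.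
  by move: (xj k) (yj k); rewrite /offset;
    case: b1 b2 e1 e2 xy yc0 lt_kj => [] [] [] [] /=; lra.
split=> //.
have ge0_kj z : z \in C -> 0 <= offset z k - offset z j.
  move=> zC; have [g1 [g2 zy]] := clique_step k j zC yC.
  by move: y_kj; rewrite /offset; case: g1 g2 zy => [] [] /=; lra.
have uniqC : uniq C by case: cliqueC.
rewrite -subr_gt0 /load -sumrB (bigD1_seq y yC uniqC) /= y_kj.
have : 0 <= \sum_(z <- C | z != y) (offset z k - offset z j).
  by rewrite big_seq_cond; apply: sumr_ge0 => z /andP[zC _]; apply: ge0_kj.
lra.
Qed.

Lemma pivot_sep x y : x \in C -> y \in C -> x != y ->
  x 0 (pivot x) - y 0 (pivot x) < x 0 (pivot y) - y 0 (pivot y).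
Proof.
move=> xC yC xy; rewrite ltNge; apply/negP => le_xy.
set a := pivot x in le_xy *; set b := pivot y in le_xy *.
have [xb_a [ya_b eq_ab]] : offset x b = offset x a /\ offset y a = offset y b /\
    x 0 a - y 0 a = x 0 b - y 0 b.
  by move: (pivot_min x b) (pivot_min y a) le_xy; rewrite /offset; lra.
have [j [k lt_jk]] := clique_sep xC yC xy.
have [lt_ja | le_aj] := ltrP (x 0 j - y 0 j) (x 0 a - y 0 a).
- have ya_min l : offset y a <= offset y l by rewrite ya_b pivot_min.
  have [xj lt_load] := load_lt_of_min_offset xC yC (pivot_min x) ya_min lt_ja.
  by have := pivot_max_load xj; rewrite leNgt lt_load.
- have xb_min l : offset x b <= offset x l by rewrite xb_a pivot_min.
  have lt_kb : y 0 k - x 0 k < y 0 b - x 0 b by lra.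
  have [yk lt_load] := load_lt_of_min_offset yC xC (pivot_min y) xb_min lt_kb.
  by have := pivot_max_load yk; rewrite leNgt lt_load.
Qed.

Lemma pivot_translate_inj x y f g : x \in C -> y \in C ->
  ~~ f (pivot x) -> ~~ g (pivot y) ->
  x + half_pH01 f = y + half_pH01 g -> x = y /\ f = g.
Proof.
move=> xC yC fx gy /rowP eq_xy.
have diff l : x 0 l - y 0 l = half_pH01 g 0 l - half_pH01 f 0 l.
  by move: (eq_xy l); rewrite [(x + _) 0 l]mxE [(y + _) 0 l]mxE; lra.
have [exy|xy] := eqVneq x y; last first.
  exfalso; move: (pivot_sep xC yC xy); rewrite !diff.
  move: (half_pH01_sub R f (pivot x) (pivot y)) (half_pH01_sub R g (pivot x) (pivot y)).
  by rewrite (negbTE fx) (negbTE gy); case: (f (pivot y)) (g (pivot x)) => [] [] /=; lra.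
subst y; split=> //; apply/ffunP => l.
move: (diff l) (diff (pivot x)); rewrite !subrr.
move: (half_pH01_sub R f l (pivot x)) (half_pH01_sub R g l (pivot x)).
by rewrite (negbTE fx) (negbTE gy); case: (f l) (g l) => [] [] //=; lra.
Qed.

Definition pivot_translates : seq vec :=
  [seq x + half_pH01 f | x <- C, f <- enum [pred f : {ffun 'I_(n.+1) -> bool} | ~~ f (pivot x)]].

Lemma uniq_pivot_translates : uniq pivot_translates.
Proof.
apply: allpairs_uniq_dep => [||_ _ /allpairsPdep[x [f [xC fx ->]]] /allpairsPdep[y [g [yC gy ->]]]].
- by case: cliqueC.
- by move=> x _; apply: enum_uniq.
rewrite !mem_enum !inE in fx gy.
by move=> /= /(pivot_translate_inj xC yC fx gy) [-> ->].
Qed.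

Lemma pivot_translates_sub : {subset pivot_translates <= closedNbhd C}.
Proof.
move=> _ /allpairsPdep[x [f [xC fx ->]]].
rewrite mem_undup; apply: allpairs_f => //.
by move: fx; rewrite mem_enum inE; apply: half_pH01_nbhd.
Qed.

Lemma size_pivot_translates : size pivot_translates = (size C * 2 ^ n)%N.
Proof.
rewrite size_allpairs_dep.
under eq_map do rewrite -cardE card_ffun_false_at card_ord /=.
by elim: C => //= x s ->; rewrite mulSn.
Qed.

End Pivot.

Lemma clique_closedNbhd_size (R : realType) (n : nat) (C : seq 'rV[R]_(n.+1)) :
  clique C -> (size C * 2 ^ n <= size (closedNbhd C))%N.
Proof.
case: C => [//|c0 C'] cliqueC.
rewrite -(size_pivot_translates _ c0) uniq_leq_size //.
- exact: (uniq_pivot_translates cliqueC (mem_head c0 C')).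
- exact: pivot_translates_sub.
Qed.

Theorem lemma12 (R : realType) (n : nat) (hn : (2 <= n)%N)
  (C : seq 'rV[R]_(n.+1)) (hC : clique C) :
  delta0 C <= ((2%:R : R) ^+ n)^-1.
Proof.
have := clique_closedNbhd_size hC; rewrite /delta0.
set m := size C; set N := size _ => le_mN.
have [->|N_gt0] := posnP N; first by rewrite invr0 mulr0 invr_ge0 exprn_ge0.
rewrite ler_pdivrMr ?ltr0n // mulrC ler_pdivlMr ?exprn_gt0 //.
by rewrite -natrX -natrM ler_nat.
Qed.
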